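(* Let $A\subseteq\{1,\dots,n\}$ and $w\in S_n$. If $\mathrm{Dela}_A(\bar\chi^w)\ne0$, then $\{(j,j+\iota_j(w)):j\notin A,\ \iota_j(w)\ne0\}\subseteq U_A^\vee$.
   Context: Let $q$ be a prime power, $\mathfrak{ut}_n$ the additive group of strictly upper triangular $n\times n$ matrices over $\mathbb{F}_q$. For $w\in S_n$ (one-line notation), $\iota_k(w)=\#\{i<w^{-1}(k):w(i)>k\}$ and $\mathfrak{ut}_w=\{x:x_{ij}\ne0\Rightarrow0<j-i\le\iota_i(w)\}$, a subgroup; $\bar\chi^w$ is the character of $\mathrm{Ind}_{\mathfrak{ut}_w}^{\mathfrak{ut}_n}(\mathbf 1)$ (the permutation character on cosets of $\mathfrak{ut}_w$). For $A\subseteq\{1,\dots,n\}$ and $1\le i<j\le n$, let $c_i=n-\#\{a\in A:a>i\}$, $U_A=\{(i,j):i\in A,j>c_i\}$, $L_A=\{(i,j):i\in A,j\le c_i\}$, $U_A^\vee=\{(i,j):i\notin A,j\le c_i\}$, $R_A=\{(i,j):i\notin A,j>c_i\}$, and $\mathfrak{ut}_A,\mathfrak{l}_A,\mathfrak{ut}_A^\vee,\mathfrak{r}_A$ the subgroups of matrices supported on them. For a function $\gamma$ on $\mathfrak{ut}_n$, $\mathrm{Dela}_A(\gamma)(u',u)=q^{-|L_A|-|R_A|}\sum_{l\in\mathfrak{l}_A,r\in\mathfrak{r}_A}(\frac{-1}{q-1})^{\#\{(i,j):r_{ij}\ne0\}}\gamma(l+u'+u+r)$ for $u'\in\mathfrak{ut}_A^\vee,u\in\mathfrak{ut}_A$.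 *)

(* Indices are 0-based: the paper's index i in {1..n}
   corresponds to the ordinal i-1 : 'I_n. *)
From HB Require Import structures.
From mathcomp Require Import all_boot all_order all_algebra all_fingroup all_field.
Set Implicit Arguments. Unset Strict Implicit. Unset Printing Implicit Defensive.
Import GRing.Theory.
Local Open Scope ring_scope.

Section UT.
Variables (F : finFieldType) (n : nat).

Definition qF : nat := #|F|.

Definition supported (S : pred ('I_n * 'I_n)) (x : 'M[F]_n) : bool :=
  [forall i, forall j, (x i j != 0) ==> S (i, j)].

Definition ut (x : 'M[F]_n) : bool := supported (fun p => (p.1 < p.2)%N) x.

Definition iota_perm (w : 'S_n) (k : 'I_n) : nat :=
  #|[set i : 'I_n | (i < (w^-1)%g k)%N && (k < w i)%N]|.

Definition utw (w : 'S_n) (x : 'M[F]_n) : bool :=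
  supported (fun p => (p.1 < p.2)%N && (p.2 - p.1 <= iota_perm w p.1)%N) x.

(* chibar^w : character of Ind_{ut_w}^{ut_n}(1), by the induced-character
   formula (1/|H|) sum_{x in G} 1_H(x^{-1} g x), written additively. *)
Definition chibar (w : 'S_n) (g : 'M[F]_n) : rat :=
  (#|[pred x | utw w x]|%:R)^-1 *
  \sum_(x : 'M[F]_n | ut x) (if utw w (- x + g + x) then 1 else 0).

Definition cA (A : {set 'I_n}) (i : 'I_n) : nat :=
  (n - #|[set a in A | (i < a)%N]|)%N.

(* With 1-based column j' = j+1, "j' > c_i" is "c_i <= j" and
   "j' <= c_i" is "j < c_i". All sets consist of positions i < j. *)
Definition UA (A : {set 'I_n}) (p : 'I_n * 'I_n) : bool :=
  [&& (p.1 < p.2)%N, p.1 \in A & (cA A p.1 <= p.2)%N].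
Definition LA (A : {set 'I_n}) (p : 'I_n * 'I_n) : bool :=
  [&& (p.1 < p.2)%N, p.1 \in A & (p.2 < cA A p.1)%N].
Definition UAv (A : {set 'I_n}) (p : 'I_n * 'I_n) : bool :=
  [&& (p.1 < p.2)%N, p.1 \notin A & (p.2 < cA A p.1)%N].
Definition RA (A : {set 'I_n}) (p : 'I_n * 'I_n) : bool :=
  [&& (p.1 < p.2)%N, p.1 \notin A & (cA A p.1 <= p.2)%N].

Definition nnz (r : 'M[F]_n) : nat := #|[set p : 'I_n * 'I_n | r p.1 p.2 != 0]|.

Definition Dela (A : {set 'I_n}) (gamma : 'M[F]_n -> rat)
    (u' u : 'M[F]_n) : rat :=
  (qF%:R ^- (#|[set p | LA A p]| + #|[set p | RA A p]|)) *
  \sum_(l : 'M[F]_n | supported (LA A) l)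
    \sum_(r : 'M[F]_n | supported (RA A) r)
      ((-1) / (qF%:R - 1)) ^+ nnz r * gamma (l + u' + u + r).

End UT.

From mathcomp Require Import all_boot all_order all_algebra all_fingroup all_field.
Set Implicit Arguments. Unset Strict Implicit. Unset Printing Implicit Defensive.
Import GRing.Theory Num.Theory.
Local Open Scope ring_scope.

(* If (j, j + iota_j(w)) lies outside U_A^v, then (as j is not in A) it lies
   in R_A.  Translating by t E_jk preserves chibar^w, because ut_w allows the
   entry (j, k), so in the inner sum of Dela over r in r_A the (j, k)-entry
   only contributes the factor sum_t c^[t != 0] = 1 + (q - 1) c = 0, where
   c = -1/(q - 1).  Hence Dela_A(chibar^w) vanishes identically. *)

Section ClearEntry.
Variables (F : finFieldType) (n : nat) (j k : 'I_n).
Local Notation E := (delta_mx j k : 'M[F]_n).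

Definition clear_entry (r : 'M[F]_n) : 'M[F]_n := r - r j k *: E.

Lemma clear_entryE (r : 'M[F]_n) i l :
  clear_entry r i l = if (i == j) && (l == k) then 0 else r i l.
Proof.
rewrite !mxE; case: (i =P j) => [->|_]; case: (l =P k) => [->|_] /=;
  by rewrite ?mulr1 ?subrr ?mulr0 ?subr0.
Qed.

Lemma add_delta_mxE (r : 'M[F]_n) (t : F) i l :
  (r + t *: E) i l = if (i == j) && (l == k) then r i l + t else r i l.
Proof.
rewrite !mxE; case: (i =P j) => [->|_]; case: (l =P k) => [->|_] /=;
  by rewrite ?mulr1 ?mulr0 ?addr0.
Qed.

Lemma supported_clear_entry (S : pred ('I_n * 'I_n)) (r : 'M[F]_n) :
  supported S r -> supported S (clear_entry r).
Proof.
move=> /forallP Sr; apply/forallP => i; apply/forallP => l.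
rewrite clear_entryE; case: ifP => _; first by rewrite eqxx.
exact: (forallP (Sr i)).
Qed.

Lemma supported_add_delta_mx (S : pred ('I_n * 'I_n)) (r : 'M[F]_n) (t : F) :
  S (j, k) -> supported S (r + t *: E) = supported S r.
Proof.
move=> Sjk; suff supp_add u s : supported S u -> supported S (u + s *: E).
  by apply/idP/idP => [/(supp_add _ (- t))|/supp_add//]; rewrite scaleNr addrK.
move=> /forallP Su; apply/forallP => i; apply/forallP => l.
rewrite add_delta_mxE; case: ifP => [/andP[/eqP-> /eqP->]|_].
  by rewrite Sjk implybT.
exact: (forallP (Su i)).
Qed.

Lemma clear_entry_add_delta_mx (r : 'M[F]_n) (t : F) :
  r j k = 0 -> clear_entry (r + t *: E) = r.
Proof.
move=> rjk0; apply/matrixP => i l; rewrite clear_entryE add_delta_mxE.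
by case: (i =P j) => [->|_]; case: (l =P k) => [->|_].
Qed.

Lemma clear_entryK (r : 'M[F]_n) : clear_entry r + r j k *: E = r.
Proof. by rewrite /clear_entry subrK. Qed.

Lemma nnz_clear_entry (r : 'M[F]_n) :
  nnz r = ((r j k != 0%R) + nnz (clear_entry r))%N.
Proof.
rewrite /nnz.
have -> : [set p | clear_entry r p.1 p.2 != 0] = [set p | r p.1 p.2 != 0] :\ (j, k).
  apply/setP => -[a b]; rewrite !inE clear_entryE xpair_eqE /=.
  by case: (a == j); case: (b == k); rewrite ?eqxx.
by rewrite (cardsD1 (j, k) [set p | _]) inE.
Qed.

End ClearEntry.

Section SignedSum.
Variables (R : numFieldType) (F : finFieldType) (n : nat).
Local Notation c := ((-1) / ((qF F)%:R - 1) : R).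

Lemma sum_sign_weight : \sum_(t : F) c ^+ (t != 0) = 0.
Proof.
rewrite (bigD1 0) //= eqxx expr0 (eq_bigr (fun _ => c)); last by move=> t /= ->.
rewrite (eq_bigl (predC1 0)) // sumr_const cardC1 /qF.
have : (1 < #|F|)%N by apply/card_gt1P; exists 0, 1; rewrite eq_sym oner_neq0.
case: #|F| => [|[|m]] // _ /=.
rewrite -addn1 natrD addrK -mulrnAr -(mulr_natr _^-1) mulVf ?pnatr_eq0 // mulr1.
exact: subrr.
Qed.

Lemma signed_sum_supported_eq0 (S : pred ('I_n * 'I_n)) (j k : 'I_n)
    (f : 'M[F]_n -> R) :
  S (j, k) -> (forall r t, f (r + t *: delta_mx j k) = f r) ->
  \sum_(r : 'M[F]_n | supported S r) c ^+ nnz r * f r = 0.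
Proof.
move=> Sjk f_inv.
(* Split the sum along the fibres of [clear_entry j k]; the fibre over r0 is
   {r0 + t *: delta_mx j k | t : F}, on which only the weight of t varies. *)
rewrite (partition_big (clear_entry j k) (fun r0 => supported S r0 && (r0 j k == 0))) /=;
  last by move=> r Sr; rewrite supported_clear_entry // clear_entryE !eqxx.
apply: big1 => r0 /andP[Sr0 /eqP r0jk0].
rewrite (reindex_onto (fun t => r0 + t *: delta_mx j k) (fun r => r j k)) /=;
  last by move=> r /andP[_ /eqP <-]; apply: clear_entryK.
transitivity (\sum_(t : F) c ^+ nnz r0 * f r0 * c ^+ (t != 0)).
  apply: eq_big => t.
    rewrite supported_add_delta_mx // clear_entry_add_delta_mx // add_delta_mxE.
    by rewrite !eqxx r0jk0 add0r Sr0 !eqxx.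
  rewrite (nnz_clear_entry j k) clear_entry_add_delta_mx // add_delta_mxE.
  by rewrite !eqxx r0jk0 add0r f_inv exprD -mulrA mulrC.
by rewrite -big_distrr /= sum_sign_weight mulr0.
Qed.

End SignedSum.

Lemma chibar_add_delta_mx (F : finFieldType) (n : nat) (w : 'S_n) (j k : 'I_n)
    (g : 'M[F]_n) (t : F) :
  (j < k)%N -> (k - j <= iota_perm w j)%N ->
  chibar w (g + t *: delta_mx j k) = chibar w g.
Proof.
move=> jk kj; rewrite /chibar; congr (_ * _); apply: eq_bigr => x _.
have -> : - x + (g + t *: delta_mx j k) + x = - x + g + x + t *: delta_mx j k.
  by rewrite [RHS]addrAC !addrA.
by rewrite /utw supported_add_delta_mx //= jk kj.
Qed.

Theorem lemma5p4 (F : finFieldType) (n : nat) (A : {set 'I_n}) (w : 'S_n) :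
  (exists u' u : 'M[F]_n,
      [/\ supported (UAv A) u', supported (UA A) u &
          Dela A (chibar w) u' u != 0]) ->
  forall j k : 'I_n,
    j \notin A -> iota_perm w j != 0%N ->
    nat_of_ord k = (nat_of_ord j + iota_perm w j)%N ->
    UAv A (j, k).
Proof.
move=> [u' [u [_ _ Dela_neq0]]] j k jA iota_neq0 kE.
have jk : (j < k)%N by rewrite kE -addn1 leq_add2l lt0n.
apply: contraTT Dela_neq0 => jk_notin_UAv; rewrite negbK; apply/eqP.
have jk_in_RA : RA A (j, k) by move: jk_notin_UAv; rewrite /UAv /RA /= jk jA -leqNgt.
rewrite /Dela big1 ?mulr0 // => l _.
apply: (signed_sum_supported_eq0 (f := fun r => chibar w (l + u' + u + r)) jk_in_RA).
by move=> r t; rewrite addrA chibar_add_delta_mx // kE addKn.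
Qed.
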